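(* For CCS, let $L_{CCS}$ be the set of all labels of the transition system $C_I$. Then $L_{CCS}$-bisimilarity coincides with ordinary strong bisimilarity of CCS: $\sim^{L_{CCS}}=\sim^{CCS}$.
   Context: CCS processes are built from $\mathbf{0}$, prefixes $a.P$, $\bar a.P$, $\tau.P$, sums, parallel composition $|$ and restriction $(\nu a)$ (extended processes also allow process variables $X$); $\equiv$ is the standard structural congruence, $\rightsquigarrow$ the standard reduction semantics (closed under $\equiv$, restriction and parallel composition, generated by $(a.P+M)|(\bar a.Q+N)\rightsquigarrow P|Q$ and $\tau.P+M\rightsquigarrow P$), and $\sim^{CCS}$ is ordinary strong bisimilarity on the standard CCS LTS with labels $\tau,a,\bar a$. The LTS $C$: (Tau) $P\rightsquigarrow Q$ gives $P\xrightarrow{-}Q$; (Rcv) $P\equiv(\nu A)(a.Q+M|R)$ with $a\notin A$ gives $P\xrightarrow{-|\bar a.X_1}(\nu A)(Q|R|X_1)$; (Snd) $P\equiv(\nu A)(\bar a.Q+M|R)$ with $a\notin A$ gives $P\xrightarrow{-|a.X_1}(\nu A)(Q|R|X_1)$. $C_I$ instantiates the process variable: $P\xrightarrow{C[-]}_{C_I}Q$ iff $P\xrightarrow{C_\epsilon[-]}Q_\epsilon$ in $C$ and a capture-avoiding substitution $\sigma$ of a pure process for $X_1$ has $Q_\epsilon\sigma\equiv Q$ and $C_\epsilon[-]\sigma=C[-]$. For a set $L$ of labels, an $L$-bisimulation is a symmetric relation $\mathcal{R}$ on pure processes such that if $P\,\mathcal{R}\,Q$ and $P\xrightarrow{C[-]}_{C_I}P'$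 then: if $C[-]\in L$, $Q\xrightarrow{C[-]}_{C_I}Q'$ with $P'\,\mathcal{R}\,Q'$; otherwise $C[Q]\rightsquigarrow Q'$ with $P'\,\mathcal{R}\,Q'$. $\sim^L$ is the largest $L$-bisimulation. *)

(* CCS with guarded sums, names as de Bruijn indices (nat),
   so that alpha-conversion is built in and capture-avoiding substitution
   is realised by shifting under restrictions. *)
From Stdlib Require Import Arith List.

Inductive act : Type :=
| AIn : nat -> act
| AOut : nat -> act
| ATau : act.

Inductive proc : Type :=
| PSum : sum -> proc
| PPar : proc -> proc -> proc
| PRes : proc -> proc            (* binds de Bruijn name 0 *)
| PVar : nat -> proc
with sum : Type :=
| SNil : sum
| SPre : act -> proc -> sum
| SPlus : sum -> sum -> sum.

Definition PNil : proc := PSum SNil.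

Definition upren (f : nat -> nat) (n : nat) : nat :=
  match n with 0 => 0 | S m => S (f m) end.

Definition act_rename (f : nat -> nat) (a : act) : act :=
  match a with AIn x => AIn (f x) | AOut x => AOut (f x) | ATau => ATau end.

Fixpoint prename (f : nat -> nat) (P : proc) : proc :=
  match P with
  | PSum M => PSum (srename f M)
  | PPar P1 P2 => PPar (prename f P1) (prename f P2)
  | PRes P1 => PRes (prename (upren f) P1)
  | PVar n => PVar n
  end
with srename (f : nat -> nat) (M : sum) : sum :=
  match M with
  | SNil => SNil
  | SPre a P1 => SPre (act_rename f a) (prename f P1)
  | SPlus M1 M2 => SPlus (srename f M1) (srename f M2)
  end.

Definition shift (P : proc) : proc := prename S P.

Definition swap01 (n : nat) : nat :=
  match n with 0 => 1 | 1 => 0 | n => n end.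

Fixpoint ppure (P : proc) : Prop :=
  match P with
  | PSum M => spure M
  | PPar P1 P2 => ppure P1 /\ ppure P2
  | PRes P1 => ppure P1
  | PVar _ => False
  end
with spure (M : sum) : Prop :=
  match M with
  | SNil => True
  | SPre _ P1 => ppure P1
  | SPlus M1 M2 => spure M1 /\ spure M2
  end.

(* (nu A) P with |A| = n *)
Definition resn (n : nat) (P : proc) : proc := Nat.iter n PRes P.

Inductive pcong : proc -> proc -> Prop :=
| pc_refl P : pcong P P
| pc_sym P Q : pcong P Q -> pcong Q P
| pc_trans P Q R : pcong P Q -> pcong Q R -> pcong P R
| pc_sum M N : scong M N -> pcong (PSum M) (PSum N)
| pc_par P P' Q Q' : pcong P P' -> pcong Q Q' -> pcong (PPar P Q) (PPar P' Q')
| pc_res P P' : pcong P P' -> pcong (PRes P) (PRes P')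
| pc_par_comm P Q : pcong (PPar P Q) (PPar Q P)
| pc_par_assoc P Q R : pcong (PPar (PPar P Q) R) (PPar P (PPar Q R))
| pc_par_nil P : pcong (PPar P PNil) P
| pc_res_nil : pcong (PRes PNil) PNil
| pc_res_swap P : pcong (PRes (PRes P)) (PRes (PRes (prename swap01 P)))
| pc_extr P Q : pcong (PPar (PRes P) Q) (PRes (PPar P (shift Q)))
with scong : sum -> sum -> Prop :=
| sc_refl M : scong M M
| sc_sym M N : scong M N -> scong N M
| sc_trans M N K : scong M N -> scong N K -> scong M K
| sc_pre a P Q : pcong P Q -> scong (SPre a P) (SPre a Q)
| sc_plus M M' N N' : scong M M' -> scong N N' -> scong (SPlus M N) (SPlus M' N')
| sc_plus_comm M N : scong (SPlus M N) (SPlus N M)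
| sc_plus_assoc M N K : scong (SPlus (SPlus M N) K) (SPlus M (SPlus N K))
| sc_plus_nil M : scong (SPlus M SNil) M.

Inductive red : proc -> proc -> Prop :=
| red_com a P M Q N :
    red (PPar (PSum (SPlus (SPre (AIn a) P) M)) (PSum (SPlus (SPre (AOut a) Q) N)))
        (PPar P Q)
| red_tau P M : red (PSum (SPlus (SPre ATau P) M)) P
| red_res P P' : red P P' -> red (PRes P) (PRes P')
| red_par P P' Q : red P P' -> red (PPar P Q) (PPar P' Q)
| red_cong P P0 Q0 Q : pcong P P0 -> red P0 Q0 -> pcong Q0 Q -> red P Q.

(* labels: contexts  -   and  - | alpha.T  *)
Inductive ctx : Type :=
| CHole : ctx
| CPre : act -> proc -> ctx.

Definition plug (C : ctx) (P : proc) : proc :=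
  match C with
  | CHole => P
  | CPre a T => PPar P (PSum (SPre a T))
  end.

Definition X1 : proc := PVar 1.

Inductive cstep : proc -> ctx -> proc -> Prop :=
| cs_tau P Q : red P Q -> cstep P CHole Q
| cs_rcv P n a Q M R :
    pcong P (resn n (PPar (PSum (SPlus (SPre (AIn (a + n)) Q) M)) R)) ->
    cstep P (CPre (AOut a) X1) (resn n (PPar (PPar Q R) X1))
| cs_snd P n a Q M R :
    pcong P (resn n (PPar (PSum (SPlus (SPre (AOut (a + n)) Q) M)) R)) ->
    cstep P (CPre (AIn a) X1) (resn n (PPar (PPar Q R) X1)).

Fixpoint psubst (T : proc) (P : proc) : proc :=
  match P with
  | PSum M => PSum (ssubst T M)
  | PPar P1 P2 => PPar (psubst T P1) (psubst T P2)
  | PRes P1 => PRes (psubst (shift T) P1)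
  | PVar n => if Nat.eqb n 1 then T else PVar n
  end
with ssubst (T : proc) (M : sum) : sum :=
  match M with
  | SNil => SNil
  | SPre a P1 => SPre a (psubst T P1)
  | SPlus M1 M2 => SPlus (ssubst T M1) (ssubst T M2)
  end.

Definition csubst (T : proc) (C : ctx) : ctx :=
  match C with
  | CHole => CHole
  | CPre a U => CPre a (psubst T U)
  end.

Definition cstepI (P : proc) (C : ctx) (Q : proc) : Prop :=
  ppure P /\
  exists Ce Qe T, cstep P Ce Qe /\ ppure T /\
                  pcong (psubst T Qe) Q /\ csubst T Ce = C.

Definition L_bisimulation (L : ctx -> Prop) (R : proc -> proc -> Prop) : Prop :=
  (forall P Q, R P Q -> ppure P /\ ppure Q) /\
  (forall P Q, R P Q -> R Q P) /\
  (forall P Q C P', R P Q -> cstepI P C P' ->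
     (L C -> exists Q', cstepI Q C Q' /\ R P' Q') /\
     (~ L C -> exists Q', red (plug C Q) Q' /\ R P' Q')).

Definition L_bisim (L : ctx -> Prop) (P Q : proc) : Prop :=
  exists R, L_bisimulation L R /\ R P Q.

Definition L_CCS (C : ctx) : Prop := exists P Q, cstepI P C Q.

Inductive slts : sum -> act -> proc -> Prop :=
| sl_pre a P : slts (SPre a P) a P
| sl_l M N a P : slts M a P -> slts (SPlus M N) a P
| sl_r M N a P : slts N a P -> slts (SPlus M N) a P.

Definition act_unshift (a : act) : option act :=
  match a with
  | ATau => Some ATau
  | AIn 0 | AOut 0 => None
  | AIn (S x) => Some (AIn x)
  | AOut (S x) => Some (AOut x)
  end.

Inductive lts : proc -> act -> proc -> Prop :=
| l_sum M a P : slts M a P -> lts (PSum M) a P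
| l_par1 P P' Q a : lts P a P' -> lts (PPar P Q) a (PPar P' Q)
| l_par2 P Q Q' a : lts Q a Q' -> lts (PPar P Q) a (PPar P Q')
| l_com1 P P' Q Q' x : lts P (AIn x) P' -> lts Q (AOut x) Q' ->
    lts (PPar P Q) ATau (PPar P' Q')
| l_com2 P P' Q Q' x : lts P (AOut x) P' -> lts Q (AIn x) Q' ->
    lts (PPar P Q) ATau (PPar P' Q')
| l_res P P' a b : lts P a P' -> act_unshift a = Some b ->
    lts (PRes P) b (PRes P').

Definition strong_bisimulation (R : proc -> proc -> Prop) : Prop :=
  (forall P Q, R P Q -> R Q P) /\
  (forall P Q a P', R P Q -> lts P a P' -> exists Q', lts Q a Q' /\ R P' Q').

Definition ccs_bisim (P Q : proc) : Prop :=
  exists R, strong_bisimulation R /\ R P Q.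

(* Two facts make the bisimulation games of C_I and of the standard LTS match.
   First, the C_I labels are exactly what a single CCS transition produces:
   a tau-step of C_I is a reduction, and reductions coincide with
   tau-transitions up to structural congruence; a step labelled [- | abar.T]
   exists iff the process can do [a], and its target is the [a]-derivative put
   in parallel with [T] (the scope extrusion of the restricted names of the
   derivative over [T] is an instance of structural congruence).  Second,
   structural congruence is itself a strong bisimulation and strong
   bisimilarity is preserved by parallel composition, so working up to
   congruence and with the extra parallel component [T] costs nothing.  Since
   every label of a step of C_I lies in L_CCS, the clause of L-bisimulation for
   labels outside L is vacuous. *)
From Stdlib Require Import Arith Lia Bool.

Scheme proc_mind := Induction for proc Sort Prop
with sum_mind := Induction for sum Sort Prop.
Combined Scheme proc_sum_mind from proc_mind, sum_mind.
Scheme pcong_mind := Induction for pcong Sort Prop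
with scong_mind := Induction for scong Sort Prop.
Combined Scheme cong_mind from pcong_mind, scong_mind.

Ltac inv H := inversion H; subst; clear H.

Ltac inv_some :=
  match goal with E : Some _ = Some _ |- _ => inv E end.

Lemma rename_ext :
  (forall P f g, (forall n, f n = g n) -> prename f P = prename g P) /\
  (forall M f g, (forall n, f n = g n) -> srename f M = srename g M).
Proof.
  apply proc_sum_mind; intros; simpl; f_equal; auto.
  - apply H; intros [|n]; simpl; auto.
  - destruct a; simpl; rewrite ?H0; auto.
Qed.

Lemma rename_comp :
  (forall P f g, prename f (prename g P) = prename (fun n => f (g n)) P) /\
  (forall M f g, srename f (srename g M) = srename (fun n => f (g n)) M).
Proof.
  apply proc_sum_mind; intros; simpl; f_equal; auto.
  - rewrite H; apply rename_ext; intros [|n]; simpl; auto.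
  - destruct a; simpl; auto.
Qed.

Lemma rename_id :
  (forall P f, (forall n, f n = n) -> prename f P = P) /\
  (forall M f, (forall n, f n = n) -> srename f M = M).
Proof.
  apply proc_sum_mind; intros; simpl; f_equal; auto.
  - apply H; intros [|n]; simpl; auto.
  - destruct a; simpl; rewrite ?H0; auto.
Qed.

Lemma swap01_involutive P : prename swap01 (prename swap01 P) = P.
Proof.
  rewrite (proj1 rename_comp); apply (proj1 rename_id); intros [|[|n]]; reflexivity.
Qed.

Lemma pure_rename :
  (forall P f, ppure (prename f P) <-> ppure P) /\
  (forall M f, spure (srename f M) <-> spure M).
Proof.
  apply proc_sum_mind; intros; simpl;
  repeat match goal with H: forall f, _ <-> _ |- _ => rewrite H; clear H end; tauto.
Qed.

Lemma cong_pure_iff :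
  (forall P Q, pcong P Q -> (ppure P <-> ppure Q)) /\
  (forall M N, scong M N -> (spure M <-> spure N)).
Proof.
  apply cong_mind; intros; simpl in *; unfold shift;
  rewrite ?(proj1 pure_rename); tauto.
Qed.

Lemma pcong_pure P Q : pcong P Q -> ppure P -> ppure Q.
Proof. intro H; apply (proj1 cong_pure_iff _ _ H). Qed.

Lemma lts_pure P a P' : lts P a P' -> ppure P -> ppure P'.
Proof.
  induction 1; simpl; try tauto.
  induction H; simpl; tauto.
Qed.

Lemma unshift_rename f a b :
  act_unshift a = Some b -> act_unshift (act_rename (upren f) a) = Some (act_rename f b).
Proof. destruct a as [[|x]|[|x]|]; simpl; intro H; inv H; auto. Qed.

Lemma unshift_shift a : act_unshift (act_rename S a) = Some a.
Proof. destruct a; reflexivity. Qed.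

Lemma slts_rename M a P f : slts M a P -> slts (srename f M) (act_rename f a) (prename f P).
Proof. induction 1; simpl; eauto using slts. Qed.

Lemma lts_rename P a P' f : lts P a P' -> lts (prename f P) (act_rename f a) (prename f P').
Proof.
  intro H; revert f; induction H; intro f; simpl; eauto using lts, slts_rename.
  eapply l_res; [apply IHlts | apply unshift_rename; auto].
Qed.

Lemma slts_rename_inv f M a P : slts (srename f M) a P ->
  exists a0 P0, slts M a0 P0 /\ a = act_rename f a0 /\ P = prename f P0.
Proof.
  revert a P; induction M; simpl; intros a0 P0 H; inv H.
  - eauto 6 using slts.
  - match goal with Hl : slts _ _ _ |- _ =>
      destruct (IHM1 _ _ Hl) as (b & Q & ? & ? & ?) end; eauto 6 using slts.
  - match goal with Hl : slts _ _ _ |- _ =>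
      destruct (IHM2 _ _ Hl) as (b & Q & ? & ? & ?) end; eauto 6 using slts.
Qed.

Lemma upren_inj f : (forall x y, f x = f y -> x = y) ->
  forall x y, upren f x = upren f y -> x = y.
Proof. intros Hf [|x] [|y]; simpl; intro H; inv H; auto. Qed.

Lemma lts_rename_inv f P a X' :
  (forall x y, f x = f y -> x = y) -> lts (prename f P) a X' ->
  exists a0 P', lts P a0 P' /\ a = act_rename f a0 /\ X' = prename f P'.
Proof.
  intros Hf H; remember (prename f P) as X eqn:E; revert f P Hf E.
  induction H; intros f P0 Hf E; destruct P0; simpl in E; try discriminate; inv E.
  - destruct (slts_rename_inv _ _ _ _ H) as (b & Q & ? & -> & ->).
    exists b, Q; eauto using lts.
  - destruct (IHlts f P0_1 Hf eq_refl) as (b & Q & ? & -> & ->).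
    exists b, (PPar Q P0_2); eauto using lts.
  - destruct (IHlts f P0_2 Hf eq_refl) as (b & Q & ? & -> & ->).
    exists b, (PPar P0_1 Q); eauto using lts.
  - destruct (IHlts1 f P0_1 Hf eq_refl) as ([y| |] & Q1 & ? & Hb & ->); inv Hb.
    destruct (IHlts2 f P0_2 Hf eq_refl) as ([|z|] & Q2 & ? & Hc & ->); inv Hc.
    match goal with E : f y = f z |- _ => apply Hf in E; subst end.
    exists ATau, (PPar Q1 Q2); eauto using lts.
  - destruct (IHlts1 f P0_1 Hf eq_refl) as ([|y|] & Q1 & ? & Hb & ->); inv Hb.
    destruct (IHlts2 f P0_2 Hf eq_refl) as ([z| |] & Q2 & ? & Hc & ->); inv Hc.
    match goal with E : f y = f z |- _ => apply Hf in E; subst end.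
    exists ATau, (PPar Q1 Q2); eauto using lts.
  - destruct (IHlts (upren f) P0 (upren_inj f Hf) eq_refl) as (b1 & Q & ? & -> & ->).
    destruct b1 as [[|x]|[|x]|]; simpl in H0; inv H0;
      eexists _, (PRes Q); (split; [eapply l_res; eauto; reflexivity | auto]).
Qed.

(** * Structural congruence is a strong bisimulation *)

Definition sim_upto (P Q : proc) : Prop :=
  forall a P', lts P a P' -> exists Q', lts Q a Q' /\ pcong P' Q'.

Definition ssim_upto (M N : sum) : Prop :=
  forall a P, slts M a P -> exists P', slts N a P' /\ pcong P P'.

Lemma lts_nil a X : ~ lts PNil a X.
Proof. intro H; inv H; match goal with Hs : slts _ _ _ |- _ => inv Hs end. Qed.

Lemma sim_refl P : sim_upto P P.
Proof. intros a P' H; exists P'; split; eauto using pcong. Qed.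

Lemma sim_trans P Q R : sim_upto P Q -> sim_upto Q R -> sim_upto P R.
Proof.
  intros H1 H2 a P' H. destruct (H1 _ _ H) as (Q' & HQ & E1).
  destruct (H2 _ _ HQ) as (R' & HR & E2). exists R'; split; eauto using pcong.
Qed.

Lemma ssim_refl M : ssim_upto M M.
Proof. intros a P' H; exists P'; split; eauto using pcong. Qed.

Lemma ssim_trans M N K : ssim_upto M N -> ssim_upto N K -> ssim_upto M K.
Proof.
  intros H1 H2 a P' H. destruct (H1 _ _ H) as (Q' & HQ & E1).
  destruct (H2 _ _ HQ) as (R' & HR & E2). exists R'; split; eauto using pcong.
Qed.

Lemma sim_sum M N : ssim_upto M N -> sim_upto (PSum M) (PSum N).
Proof.
  intros HS a P' H. inv H. destruct (HS _ _ H1) as (Q' & ? & ?).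
  exists Q'; split; eauto using lts.
Qed.

Lemma sim_par P P' Q Q' : pcong P P' -> pcong Q Q' ->
  sim_upto P P' -> sim_upto Q Q' -> sim_upto (PPar P Q) (PPar P' Q').
Proof.
  intros E1 E2 H1 H2 a X H. inv H;
  repeat match goal with
  | Hl : lts P _ _ |- _ => let Y := fresh "Y" in destruct (H1 _ _ Hl) as (Y & ? & ?); clear Hl
  | Hl : lts Q _ _ |- _ => let Y := fresh "Y" in destruct (H2 _ _ Hl) as (Y & ? & ?); clear Hl
  end; eexists; split; eauto using lts, pcong.
Qed.

Lemma sim_res P P' : sim_upto P P' -> sim_upto (PRes P) (PRes P').
Proof.
  intros H1 a X H. inv H.
  match goal with Hl : lts P _ _ |- _ => destruct (H1 _ _ Hl) as (Y & ? & ?) end.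
  exists (PRes Y); split; eauto using lts, pcong.
Qed.

Lemma sim_par_comm P Q : sim_upto (PPar P Q) (PPar Q P).
Proof. intros a X H. inv H; eexists; split; eauto using lts, pcong. Qed.

Lemma sim_par_assoc P Q R : sim_upto (PPar (PPar P Q) R) (PPar P (PPar Q R)).
Proof.
  intros a X H. inv H; repeat match goal with Hl : lts (PPar _ _) _ _ |- _ => inv Hl end;
  eexists; split; eauto 7 using lts, pcong.
Qed.

Lemma sim_par_assoc_sym P Q R : sim_upto (PPar P (PPar Q R)) (PPar (PPar P Q) R).
Proof.
  intros a X H. inv H; repeat match goal with Hl : lts (PPar _ _) _ _ |- _ => inv Hl end;
  eexists; split; eauto 7 using lts, pcong.
Qed.

Lemma sim_par_nil P : sim_upto (PPar P PNil) P.
Proof.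
  intros a X H. inv H; try solve [exfalso; eapply lts_nil; eauto].
  eexists; split; eauto using pcong.
Qed.

Lemma sim_par_nil_sym P : sim_upto P (PPar P PNil).
Proof. intros a X H. eexists; split; eauto using lts, pcong. Qed.

Lemma sim_res_nil : sim_upto (PRes PNil) PNil.
Proof. intros a X H. inv H. exfalso; eapply lts_nil; eauto. Qed.

Lemma sim_res_nil_sym : sim_upto PNil (PRes PNil).
Proof. intros a X H. exfalso; eapply lts_nil; eauto. Qed.

Lemma unshift_swap01 a c b : act_unshift a = Some c -> act_unshift c = Some b ->
  exists c', act_unshift (act_rename swap01 a) = Some c' /\ act_unshift c' = Some b.
Proof.
  destruct a as [[|[|x]]|[|[|x]]|]; simpl; intros H1 H2; inv H1; simpl in H2; inv H2; eauto.
Qed.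

Lemma sim_res_swap P : sim_upto (PRes (PRes P)) (PRes (PRes (prename swap01 P))).
Proof.
  intros b X H. inv H. match goal with Hl : lts (PRes _) _ _ |- _ => inv Hl end.
  match goal with E1 : act_unshift _ = Some ?c, E2 : act_unshift ?c = Some _ |- _ =>
    destruct (unshift_swap01 _ _ _ E1 E2) as (c' & F1 & F2) end.
  eexists; split; [| apply pc_res_swap].
  eapply l_res; [eapply l_res; [apply lts_rename; eassumption | exact F1] | exact F2].
Qed.

Lemma sim_res_swap_sym P : sim_upto (PRes (PRes (prename swap01 P))) (PRes (PRes P)).
Proof.
  pose proof (sim_res_swap (prename swap01 P)) as H.
  rewrite swap01_involutive in H; exact H.
Qed.

Lemma unshift_some a b : act_unshift a = Some b -> a = act_rename S b.
Proof. destruct a as [[|y]|[|y]|]; simpl; intro H; inv H; auto. Qed.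

Lemma sim_extr P Q : sim_upto (PPar (PRes P) Q) (PRes (PPar P (shift Q))).
Proof.
  intros b X H. inv H;
  repeat match goal with
  | Hl : lts (PRes P) _ _ |- _ => inv Hl
  | E : act_unshift _ = Some _ |- _ => apply unshift_some in E; subst
  | Hl : lts Q _ _ |- _ => apply (lts_rename _ _ _ S) in Hl
  end;
  (eexists; split; [eapply l_res; [| apply unshift_shift] | apply pc_extr]).
  all: simpl in *.
  - apply l_par1; eassumption.
  - apply l_par2; eassumption.
  - eapply l_com1; eassumption.
  - eapply l_com2; eassumption.
Qed.

Lemma sim_extr_sym P Q : sim_upto (PRes (PPar P (shift Q))) (PPar (PRes P) Q).
Proof.
  intros b X H. inv H. match goal with Hl : lts (PPar P _) _ _ |- _ => inv Hl end;
  try match goal with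
  | Hl : lts (shift Q) _ _ |- _ =>
      destruct (lts_rename_inv S Q _ _ ltac:(intros; lia) Hl) as (a0 & Q0 & ? & E & ->);
      clear Hl; try (destruct a0; simpl in E; inv E)
  end;
  (eexists; split; [| apply pc_sym, pc_extr]).
  - apply l_par1; eapply l_res; eassumption.
  - subst; rewrite unshift_shift in *; inv_some; apply l_par2; assumption.
  - simpl in *; inv_some.
    eapply l_com1; [eapply l_res; [eassumption | reflexivity] | eassumption].
  - simpl in *; inv_some.
    eapply l_com2; [eapply l_res; [eassumption | reflexivity] | eassumption].
Qed.

Lemma cong_sim_upto :
  (forall P Q, pcong P Q -> sim_upto P Q /\ sim_upto Q P) /\
  (forall M N, scong M N -> ssim_upto M N /\ ssim_upto N M).
Proof.
  apply cong_mind; intros.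
  - split; apply sim_refl.
  - tauto.
  - destruct H as [? ?], H0 as [? ?]; split; eapply sim_trans; eassumption.
  - split; apply sim_sum; tauto.
  - split; apply sim_par; eauto using pcong; tauto.
  - split; apply sim_res; tauto.
  - split; apply sim_par_comm.
  - split; [apply sim_par_assoc | apply sim_par_assoc_sym].
  - split; [apply sim_par_nil | apply sim_par_nil_sym].
  - split; [apply sim_res_nil | apply sim_res_nil_sym].
  - split; [apply sim_res_swap | apply sim_res_swap_sym].
  - split; [apply sim_extr | apply sim_extr_sym].
  - split; apply ssim_refl.
  - tauto.
  - destruct H as [? ?], H0 as [? ?]; split; eapply ssim_trans; eassumption.
  - split; intros b X H0; inv H0; eexists; split; eauto using slts, pcong.
  - destruct H as [H1 H2], H0 as [H3 H4].
    split; intros b X H; inv H;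
    match goal with Hl : slts _ _ _ |- _ =>
      first [destruct (H1 _ _ Hl) as (Y & ? & ?) | destruct (H2 _ _ Hl) as (Y & ? & ?)
            | destruct (H3 _ _ Hl) as (Y & ? & ?) | destruct (H4 _ _ Hl) as (Y & ? & ?)] end;
    eauto using slts.
  - split; intros b X H; repeat match goal with Hl : slts (SPlus _ _) _ _ |- _ => inv Hl end;
    eexists; split; eauto 6 using slts, pcong.
  - split; intros b X H; repeat match goal with Hl : slts (SPlus _ _) _ _ |- _ => inv Hl end;
    eexists; split; eauto 6 using slts, pcong.
  - split; intros b X H;
    repeat match goal with Hl : slts (SPlus _ _) _ _ |- _ => inv Hl | Hl : slts SNil _ _ |- _ => inv Hl end;
    eexists; split; eauto 6 using slts, pcong.
Qed.

Lemma pcong_lts P Q a P' : pcong P Q -> lts P a P' -> exists Q', lts Q a Q' /\ pcong P' Q'.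
Proof. intro E; exact (proj1 (proj1 cong_sim_upto _ _ E) a P'). Qed.

(** * Normal forms of processes offering an action *)

Definition vis (b : bool) (x : nat) : act := if b then AIn x else AOut x.

Lemma unshift_vis a b x : act_unshift a = Some (vis b x) -> a = vis b (S x).
Proof. intro H; apply unshift_some in H; subst; destruct b; reflexivity. Qed.

Lemma rename_vis f b x : act_rename f (vis b x) = vis b (f x).
Proof. destruct b; reflexivity. Qed.

Lemma slts_nf M a P : slts M a P -> exists M', scong M (SPlus (SPre a P) M').
Proof.
  induction 1 as [a P | M N a P _ [M' E] | M N a P _ [M' E]].
  - exists SNil. apply sc_sym, sc_plus_nil.
  - exists (SPlus M' N).
    eapply sc_trans; [apply sc_plus; [exact E | apply sc_refl] | apply sc_plus_assoc].
  - exists (SPlus M' M).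
    eapply sc_trans; [apply sc_plus_comm|].
    eapply sc_trans; [apply sc_plus; [exact E | apply sc_refl] | apply sc_plus_assoc].
Qed.

Lemma pcong_resn n X Y : pcong X Y -> pcong (resn n X) (resn n Y).
Proof. intro H; induction n; simpl; [exact H | apply pc_res; exact IHn]. Qed.

Lemma pure_resn n X : ppure (resn n X) <-> ppure X.
Proof. induction n; simpl; tauto. Qed.

Lemma iter_shift_succ n T : Nat.iter n shift (shift T) = shift (Nat.iter n shift T).
Proof. induction n; simpl; congruence. Qed.

Lemma extr_resn n : forall X T,
  pcong (PPar (resn n X) T) (resn n (PPar X (Nat.iter n shift T))).
Proof.
  induction n; intros X T; simpl; [apply pc_refl|].
  eapply pc_trans; [apply pc_extr|]. apply pc_res.
  rewrite <- iter_shift_succ. apply IHn.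
Qed.

(* The prefix [vis b (x + n)] under [n] restrictions is the free name [x]. *)
Definition nfp n b x Q M R := resn n (PPar (PSum (SPlus (SPre (vis b (x + n)) Q) M)) R).

Lemma nfp_pure n b x Q M R : ppure (nfp n b x Q M R) -> ppure Q /\ ppure R.
Proof. unfold nfp; rewrite pure_resn; simpl; tauto. Qed.

Lemma nfp_lts n : forall b x Q M R, lts (nfp n b x Q M R) (vis b x) (resn n (PPar Q R)).
Proof.
  unfold nfp; induction n; intros b x Q M R; simpl.
  - rewrite Nat.add_0_r. apply l_par1, l_sum, sl_l, sl_pre.
  - eapply l_res; [| instantiate (1 := vis b (S x)); destruct b; reflexivity].
    replace (x + S n) with (S x + n) by lia. apply IHn.
Qed.

Lemma par_extr_nf n X Y T : pcong X (resn n Y) ->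
  pcong (PPar X T) (resn n (PPar Y (Nat.iter n shift T))).
Proof.
  intro E. eapply pc_trans; [apply pc_par; [exact E | apply pc_refl] | apply extr_resn].
Qed.

Lemma lts_nf P b x P' : lts P (vis b x) P' ->
  exists n Q M R, pcong P (nfp n b x Q M R) /\ pcong P' (resn n (PPar Q R)).
Proof.
  unfold nfp; intro H; remember (vis b x) as a eqn:E; revert x E.
  induction H; intros x0 E; subst; try (destruct b; discriminate).
  - destruct (slts_nf _ _ _ H) as (M1 & E1).
    exists 0, P, M1, PNil. simpl. rewrite Nat.add_0_r. split.
    + eapply pc_trans; [apply pc_sum; exact E1 | apply pc_sym, pc_par_nil].
    + apply pc_sym, pc_par_nil.
  - destruct (IHlts x0 eq_refl) as (n & Q0 & M0 & R0 & E1 & E2).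
    exists n, Q0, M0, (PPar R0 (Nat.iter n shift Q)).
    split; (eapply pc_trans; [apply par_extr_nf; eassumption | apply pcong_resn, pc_par_assoc]).
  - destruct (IHlts x0 eq_refl) as (n & Q0 & M0 & R0 & E1 & E2).
    exists n, Q0, M0, (PPar R0 (Nat.iter n shift P)).
    split; (eapply pc_trans; [apply pc_par_comm|]);
    (eapply pc_trans; [apply par_extr_nf; eassumption | apply pcong_resn, pc_par_assoc]).
  - apply unshift_vis in H0; subst.
    destruct (IHlts (S x0) eq_refl) as (n & Q0 & M0 & R0 & E1 & E2).
    exists (S n), Q0, M0, R0. simpl. replace (x0 + S n) with (S x0 + n) by lia.
    split; apply pc_res; assumption.
Qed.

(** * Reductions are the tau-transitions up to congruence *)

Lemma par_swap_r A B C : pcong (PPar (PPar A B) C) (PPar (PPar A C) B).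
Proof.
  eapply pc_trans; [apply pc_par_assoc|].
  eapply pc_trans; [apply pc_par; [apply pc_refl | apply pc_par_comm]|].
  apply pc_sym, pc_par_assoc.
Qed.

Lemma red_com_sum P b x P' N Q' : lts P (vis b x) P' -> slts N (vis (negb b) x) Q' ->
  red (PPar P (PSum N)) (PPar P' Q').
Proof.
  intro H; remember (vis b x) as a eqn:E; revert x E N Q'.
  induction H; intros x0 E N0 Q0 HN; subst; try (destruct b; discriminate).
  - destruct (slts_nf _ _ _ H) as (M1 & E1), (slts_nf _ _ _ HN) as (N1 & E2).
    destruct b; simpl in *.
    + eapply red_cong; [apply pc_par; apply pc_sum; eassumption | apply red_com | apply pc_refl].
    + eapply red_cong; [eapply pc_trans; [apply pc_par_comm | apply pc_par; apply pc_sum; eassumption]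
                       | apply red_com | apply pc_par_comm].
  - eapply red_cong; [apply par_swap_r | apply red_par; eapply IHlts; eauto | apply par_swap_r].
  - eapply red_cong; [eapply pc_trans; [apply pc_par; [apply pc_par_comm | apply pc_refl] | apply par_swap_r]
                     | apply red_par; eapply IHlts; eauto |].
    eapply pc_trans; [apply par_swap_r | apply pc_par; [apply pc_par_comm | apply pc_refl]].
  - apply unshift_vis in H0; subst.
    eapply red_cong; [apply pc_extr | apply red_res | apply pc_sym, pc_extr].
    apply (IHlts (S x0) eq_refl (srename S N0) (shift Q0)).
    rewrite <- (rename_vis S). apply slts_rename; auto.
Qed.

Lemma red_com_lts P b x P' Q Q' : lts P (vis b x) P' -> lts Q (vis (negb b) x) Q' ->
  red (PPar P Q) (PPar P' Q').
Proof.
  intros HP HQ; remember (vis (negb b) x) as a eqn:E; revert x E P P' HP.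
  induction HQ; intros x0 E P0 P0' HP; subst; try (destruct b; discriminate).
  - eapply red_com_sum; eauto using lts.
  - eapply red_cong; [apply pc_sym, pc_par_assoc | apply red_par; eapply IHHQ; eauto | apply pc_par_assoc].
  - eapply red_cong; [eapply pc_trans; [apply pc_sym, pc_par_assoc | apply par_swap_r]
                     | apply red_par; eapply IHHQ; eauto |].
    eapply pc_trans; [apply par_swap_r | apply pc_par_assoc].
  - apply unshift_vis in H; subst.
    apply (lts_rename _ _ _ S) in HP. rewrite rename_vis in HP.
    specialize (IHHQ (S x0) eq_refl _ _ HP).
    eapply red_cong; [| apply red_res; exact IHHQ |].
    + eapply pc_trans; [apply pc_par_comm|].
      eapply pc_trans; [apply pc_extr|]. apply pc_res, pc_par_comm.
    + eapply pc_trans; [apply pc_res, pc_par_comm|].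
      eapply pc_trans; [apply pc_sym, pc_extr|]. apply pc_par_comm.
Qed.

Lemma lts_tau_red P P' : lts P ATau P' -> red P P'.
Proof.
  intro H; remember ATau as a eqn:E; induction H; subst; try discriminate.
  - destruct (slts_nf _ _ _ H) as (M1 & E1).
    eapply red_cong; [apply pc_sum; eassumption | apply red_tau | apply pc_refl].
  - apply red_par; auto.
  - eapply red_cong; [apply pc_par_comm | apply red_par; auto | apply pc_par_comm].
  - apply (red_com_lts _ true x _ _ _ H H0).
  - apply (red_com_lts _ false x _ _ _ H H0).
  - apply unshift_some in H0; apply red_res; auto.
Qed.

Lemma red_lts_tau P Q : red P Q -> exists Q', lts P ATau Q' /\ pcong Q' Q.
Proof.
  induction 1 as [| | P P' _ [X [HX EX]] | P P' Q _ [X [HX EX]] | P P0 Q0 Q E0 _ [X [HX EX]] E1].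
  - eexists; split; [eapply l_com1; apply l_sum; apply sl_l; apply sl_pre | apply pc_refl].
  - eexists; split; [apply l_sum; apply sl_l; apply sl_pre | apply pc_refl].
  - exists (PRes X); split; [eapply l_res; [eauto | reflexivity] | apply pc_res; auto].
  - exists (PPar X Q); split; [apply l_par1; auto | apply pc_par; eauto using pcong].
  - destruct (pcong_lts _ _ _ _ (pc_sym _ _ E0) HX) as (Y & HY & EY).
    exists Y; split; auto. eauto using pcong.
Qed.

Lemma ccs_bisim_is_bisimulation : strong_bisimulation ccs_bisim.
Proof.
  split.
  - intros P Q (R & [Hs Hst] & H). exists R; split; [split |]; auto.
  - intros P Q a P' (R & [Hs Hst] & H) HP.
    destruct (Hst _ _ _ _ H HP) as (Q' & HQ & HR).
    exists Q'; split; auto. exists R; split; [split |]; auto.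
Qed.

Lemma ccs_bisim_sym P Q : ccs_bisim P Q -> ccs_bisim Q P.
Proof. apply (proj1 ccs_bisim_is_bisimulation). Qed.

Lemma ccs_bisim_step P Q a P' : ccs_bisim P Q -> lts P a P' ->
  exists Q', lts Q a Q' /\ ccs_bisim P' Q'.
Proof. apply (proj2 ccs_bisim_is_bisimulation). Qed.

Lemma pcong_ccs_bisim P Q : pcong P Q -> ccs_bisim P Q.
Proof.
  intro H. exists pcong; split; auto. split.
  - apply pc_sym.
  - intros A B a A' E HA. exact (pcong_lts _ _ _ _ E HA).
Qed.

Lemma ccs_bisim_trans P Q R : ccs_bisim P Q -> ccs_bisim Q R -> ccs_bisim P R.
Proof.
  intros H1 H2. exists (fun x z => exists y, ccs_bisim x y /\ ccs_bisim y z).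
  split; [split | eauto].
  - intros x z (y & A & B). exists y; split; apply ccs_bisim_sym; auto.
  - intros x z a x' (y & A & B) Hx.
    destruct (ccs_bisim_step _ _ _ _ A Hx) as (y' & Hy & A').
    destruct (ccs_bisim_step _ _ _ _ B Hy) as (z' & Hz & B').
    exists z'; split; eauto.
Qed.

Lemma ccs_bisim_par_r P Q T : ccs_bisim P Q -> ccs_bisim (PPar P T) (PPar Q T).
Proof.
  intro H. exists (fun X Y => exists A B T, X = PPar A T /\ Y = PPar B T /\ ccs_bisim A B).
  split; [split | eauto 7].
  - intros X Y (A & B & T0 & -> & -> & HB). exists B, A, T0; auto using ccs_bisim_sym.
  - intros X Y a X' (A & B & T0 & -> & -> & HB) HX. inv HX;
    try match goal with Hl : lts A _ _ |- _ =>
      destruct (ccs_bisim_step _ _ _ _ HB Hl) as (B' & ? & ?) end;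
    eexists; (split; [eauto using lts | eauto 7]).
Qed.

Lemma pcong_ccs_bisim_trans P P' Q : pcong P P' -> ccs_bisim P' Q -> ccs_bisim P Q.
Proof. intros E H; exact (ccs_bisim_trans _ _ _ (pcong_ccs_bisim _ _ E) H). Qed.

(** * The steps of C_I *)

Lemma psubst_pure :
  (forall P T, ppure P -> psubst T P = P) /\ (forall M T, spure M -> ssubst T M = M).
Proof.
  apply proc_sum_mind; intros; simpl in *; try tauto; f_equal; firstorder.
Qed.

Lemma psubst_resn n : forall T X,
  psubst T (resn n X) = resn n (psubst (Nat.iter n shift T) X).
Proof.
  induction n; intros T X; simpl; auto.
  rewrite IHn, iter_shift_succ. reflexivity.
Qed.

Lemma psubst_nf n Q R T : ppure Q -> ppure R ->
  psubst T (resn n (PPar (PPar Q R) X1)) = resn n (PPar (PPar Q R) (Nat.iter n shift T)).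
Proof.
  intros HQ HR. rewrite psubst_resn. simpl.
  rewrite (proj1 psubst_pure Q), (proj1 psubst_pure R); auto.
Qed.

Lemma vis_inj b x b' x' : vis b x = vis b' x' -> b = b' /\ x = x'.
Proof. destruct b, b'; simpl; intro H; inv H; auto. Qed.

Lemma cstep_vis P n b x Q M R : pcong P (nfp n b x Q M R) ->
  cstep P (CPre (vis (negb b) x) X1) (resn n (PPar (PPar Q R) X1)).
Proof. destruct b; intro H; [apply cs_rcv with (M := M) | apply cs_snd with (M := M)]; exact H. Qed.

Lemma cstep_inv P Ce Qe : cstep P Ce Qe ->
  (Ce = CHole /\ red P Qe) \/
  exists b n x Q M R, Ce = CPre (vis (negb b) x) X1 /\ pcong P (nfp n b x Q M R) /\
                      Qe = resn n (PPar (PPar Q R) X1).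
Proof.
  destruct 1.
  - left; auto.
  - right; exists true, n, a, Q, M, R; auto.
  - right; exists false, n, a, Q, M, R; auto.
Qed.

Lemma cstepI_tau P P1 : ppure P -> lts P ATau P1 -> cstepI P CHole P1.
Proof.
  intros pP HP1. split; auto.
  exists CHole, P1, PNil. split; [apply cs_tau, lts_tau_red; exact HP1|].
  split; [exact I|]. split; [|reflexivity].
  rewrite (proj1 psubst_pure P1) by (eapply lts_pure; eauto). apply pc_refl.
Qed.

Lemma cstepI_vis P b x P1 T : ppure P -> ppure T -> lts P (vis b x) P1 ->
  cstepI P (CPre (vis (negb b) x) T) (PPar P1 T).
Proof.
  intros pP pT HP1. split; auto.
  destruct (lts_nf _ _ _ _ HP1) as (n & Q & M & R & E & E1).
  destruct (nfp_pure _ _ _ _ _ _ (pcong_pure _ _ E pP)) as [pQ pR].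
  exists (CPre (vis (negb b) x) X1), (resn n (PPar (PPar Q R) X1)), T.
  split; [eapply cstep_vis; exact E|]. split; [exact pT|]. split; [|reflexivity].
  rewrite psubst_nf by auto. apply pc_sym, par_extr_nf, E1.
Qed.

Lemma cstepI_inv P C P' : cstepI P C P' ->
  (C = CHole /\ exists P1, lts P ATau P1 /\ pcong P1 P') \/
  (exists b x T P1, C = CPre (vis (negb b) x) T /\ ppure T /\
                    lts P (vis b x) P1 /\ pcong (PPar P1 T) P').
Proof.
  intros (pP & Ce & Qe & T & Hc & pT & E & <-).
  destruct (cstep_inv _ _ _ Hc) as [[-> Hr] | (b & n & x & Q & M & R & -> & EP & ->)].
  - left; split; [reflexivity|].
    destruct (red_lts_tau _ _ Hr) as (P1 & HP1 & E1).
    assert (pQe : ppure Qe) by (eapply pcong_pure; [exact E1 | eapply lts_pure; eauto]).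
    simpl in E; rewrite (proj1 psubst_pure _ _ pQe) in E.
    exists P1; eauto using pcong.
  - right.
    destruct (nfp_pure _ _ _ _ _ _ (pcong_pure _ _ EP pP)) as [pQ pR].
    destruct (pcong_lts _ _ _ _ (pc_sym _ _ EP) (nfp_lts n b x Q M R)) as (P1 & HP1 & E1).
    exists b, x, T, P1. split; [reflexivity|]. split; [exact pT|]. split; [exact HP1|].
    rewrite psubst_nf in E by auto.
    eapply pc_trans; [| exact E]. apply par_extr_nf, pc_sym, E1.
Qed.

Lemma cstepI_pure P C P' : cstepI P C P' -> ppure P'.
Proof.
  intro H. assert (pP : ppure P) by apply H.
  destruct (cstepI_inv _ _ _ H) as [[_ (P1 & HP1 & E)] | (b & x & T & P1 & _ & pT & HP1 & E)];
    eapply pcong_pure; try exact E.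
  - eapply lts_pure; eauto.
  - split; [eapply lts_pure; eauto | exact pT].
Qed.

Lemma ccs_bisim_L_bisimulation :
  L_bisimulation L_CCS (fun A B => ppure A /\ ppure B /\ ccs_bisim A B).
Proof.
  split; [intros A B (? & ? & ?); auto | split].
  - intros A B (? & ? & ?); auto using ccs_bisim_sym.
  - intros A B C A' (pA & pB & HAB) HC.
    split; [intros _ | intro notL; exfalso; apply notL; exists A, A'; exact HC].
    assert (pA' := cstepI_pure _ _ _ HC).
    destruct (cstepI_inv _ _ _ HC)
      as [[-> (A1 & HA1 & E)] | (b & x & T & A1 & -> & pT & HA1 & E)];
      destruct (ccs_bisim_step _ _ _ _ HAB HA1) as (B1 & HB1 & H1).
    + exists B1; split; [apply cstepI_tau; auto|].
      split; [exact pA'|]. split; [eapply lts_pure; eauto|].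
      exact (pcong_ccs_bisim_trans _ _ _ (pc_sym _ _ E) H1).
    + exists (PPar B1 T); split; [apply cstepI_vis; auto|].
      split; [exact pA'|]. split; [split; [eapply lts_pure; eauto | exact pT]|].
      exact (pcong_ccs_bisim_trans _ _ _ (pc_sym _ _ E) (ccs_bisim_par_r _ _ _ H1)).
Qed.

Section L_bisimulation_transfer.

Variable RL : proc -> proc -> Prop.
Hypothesis HRL : L_bisimulation L_CCS RL.

Lemma L_bisimulation_cstepI P Q C P' : RL P Q -> cstepI P C P' ->
  exists Q', cstepI Q C Q' /\ RL P' Q'.
Proof.
  intros HPQ HC. apply (proj2 (proj2 HRL) _ _ _ _ HPQ HC). exists P, P'; exact HC.
Qed.

(* A visible transition is tested with the context [- | abar.0], so the
   parallel component it introduces is inert. *)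
Lemma L_bisimulation_lts P Q a P1 : RL P Q -> lts P a P1 ->
  exists Q1 P2 Q2, lts Q a Q1 /\ pcong P1 P2 /\ RL P2 Q2 /\ pcong Q2 Q1.
Proof.
  intros HPQ HP1. destruct (proj1 HRL _ _ HPQ) as [pP _].
  assert (Hvis : forall b x, lts P (vis b x) P1 ->
    exists Q1 P2 Q2, lts Q (vis b x) Q1 /\ pcong P1 P2 /\ RL P2 Q2 /\ pcong Q2 Q1).
  { intros b x HPv.
    destruct (L_bisimulation_cstepI _ _ _ _ HPQ (cstepI_vis _ _ _ _ PNil pP I HPv))
      as (Q' & HQ' & HR).
    destruct (cstepI_inv _ _ _ HQ')
      as [[Hc _] | (b' & x' & T & Q1 & Hc & _ & HQ1 & E)]; inv Hc.
    match goal with Hv : vis _ _ = vis _ _ |- _ =>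
      apply vis_inj in Hv; destruct Hv as [Hb ->]; apply negb_sym in Hb;
      rewrite negb_involutive in Hb; subst end.
    exists Q1, (PPar P1 PNil), Q'. split; [exact HQ1|]. split; [apply pc_sym, pc_par_nil|].
    split; [exact HR|]. eapply pc_trans; [apply pc_sym, E | apply pc_par_nil]. }
  destruct a as [x|x|]; [exact (Hvis true x HP1) | exact (Hvis false x HP1)|].
  destruct (L_bisimulation_cstepI _ _ _ _ HPQ (cstepI_tau _ _ pP HP1)) as (Q' & HQ' & HR).
  destruct (cstepI_inv _ _ _ HQ')
    as [[_ (Q1 & HQ1 & E)] | (b & x & T & Q1 & Hc & _)]; [| discriminate].
  exists Q1, P1, Q'. split; [exact HQ1|]. split; [apply pc_refl|].
  split; [exact HR | apply pc_sym, E].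
Qed.

Lemma L_bisimulation_strong_bisimulation :
  strong_bisimulation (fun A B => exists P Q, pcong A P /\ RL P Q /\ pcong Q B).
Proof.
  split.
  - intros A B (P & Q & E1 & HPQ & E2). exists Q, P.
    split; [apply pc_sym, E2|]. split; [apply (proj1 (proj2 HRL)), HPQ | apply pc_sym, E1].
  - intros A B a A' (P & Q & E1 & HPQ & E2) HA.
    destruct (pcong_lts _ _ _ _ E1 HA) as (P1 & HP1 & EP1).
    destruct (L_bisimulation_lts _ _ _ _ HPQ HP1) as (Q1 & P2 & Q2 & HQ1 & EP2 & HR & EQ2).
    destruct (pcong_lts _ _ _ _ E2 HQ1) as (B1 & HB1 & EB1).
    exists B1; split; [exact HB1|]. exists P2, Q2; eauto using pcong.
Qed.

End L_bisimulation_transfer.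

Theorem mainTheorem8 (P Q : proc) :
  ppure P -> ppure Q -> (L_bisim L_CCS P Q <-> ccs_bisim P Q).
Proof.
  intros pP pQ. split.
  - intros (RL & HRL & HPQ).
    eexists; split; [exact (L_bisimulation_strong_bisimulation RL HRL)|].
    exists P, Q; split; [apply pc_refl|]. split; [exact HPQ | apply pc_refl].
  - intro HPQ. eexists; split; [exact ccs_bisim_L_bisimulation | exact (conj pP (conj pQ HPQ))].
Qed.
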